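(* Let $m\ge 2$ be an integer and let $\mathcal{A}\subset\mathbb{R}$ be a finite alphabet. Let $(X^{(j)}_i)_{i\ge 1,\,1\le j\le m}$ be independent and identically distributed random variables with values in $\mathcal{A}$. Let $S:\mathcal{A}^m\to[0,\infty)$ be a function that is not identically zero, is invariant under permutations of its $m$ arguments, satisfies $s^*:=\sup_{x\in\mathcal{A}^m}S(x)<\infty$, and for which there is a constant $D>0$ such that $|S(x)-S(y)|\le D$ whenever $x,y\in\mathcal{A}^m$ differ in at most one coordinate. For $N\in\mathbb{N}$ let $L_N$ be the optimal alignment score of the $m$ words $X^{(j)}_1\cdots X^{(j)}_N$, $j=1,\dots,m$. Then for every $n\in\mathbb{N}$ and every $x>0$, $$\mathbb{P}\big(L_{m^2n}\ge m^2x\big)\le 2^{-m}m^{4m}n^{2m}\Big(\mathbb{P}\big(L_{mn}\ge m(x-s^* )\big)\Big)^{1/m}.$$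
   Context: Alignments and optimal score: for finite words $w^{(1)},\dots,w^{(m)}$ over $\mathcal{A}$ of lengths $\ell_1,\dots,\ell_m$, an alignment is a choice of an integer $k\ge 0$ and, for each $j$, indices $1\le \pi^{(j)}_1<\cdots<\pi^{(j)}_k\le \ell_j$; its score is $\sum_{i=1}^k S(w^{(1)}_{\pi^{(1)}_i},\dots,w^{(m)}_{\pi^{(m)}_i})$. The optimal score $L(w^{(1)};\dots;w^{(m)})$ is the maximum score over all alignments. *)

From HB Require Import structures.
From mathcomp Require Import all_boot all_order all_algebra all_fingroup finmap.
From mathcomp Require Import all_classical all_reals all_analysis.
Set Implicit Arguments. Unset Strict Implicit. Unset Printing Implicit Defensive.
Import Order.TTheory GRing.Theory Num.Theory.
Local Open Scope ring_scope.

Section Align.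
Variables (R : realType) (A : finType) (m : nat).

Definition words (N : nat) := {ffun 'I_m -> {ffun 'I_N -> A}}.

Definition is_alignment (N k : nat) (pi : {ffun 'I_m -> {ffun 'I_k -> 'I_N}}) : bool :=
  [forall j, forall i1 : 'I_k, forall i2 : 'I_k, (i1 < i2)%N ==> (pi j i1 < pi j i2)%N].

Definition align_score (S : {ffun 'I_m -> A} -> R) (N k : nat) (w : words N)
  (pi : {ffun 'I_m -> {ffun 'I_k -> 'I_N}}) : R :=
  \sum_(i < k) S [ffun j => w j (pi j i)].

(* optimal score: maximum over all alignments (any alignment has k <= N;
   k = 0 gives score 0, so 0 is a correct default for the max) *)
Definition opt_score (S : {ffun 'I_m -> A} -> R) (N : nat) (w : words N) : R :=
  \big[Num.max/0]_(k < N.+1)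
     \big[Num.max/0]_(pi : {ffun 'I_m -> {ffun 'I_k -> 'I_N}} | is_alignment pi)
        align_score S w pi.

(* P(L_N >= t) when all letters X^(j)_i are i.i.d. with law p on A:
   the law of (X^(j)_i)_{i<=N, j<=m} is the product measure. *)
Definition prob_L_ge (p : A -> R) (S : {ffun 'I_m -> A} -> R) (N : nat) (t : R) : R :=
  \sum_(w : words N | t <= opt_score S w) \prod_(j < m) \prod_(i < N) p (w j i).

Definition smax (S : {ffun 'I_m -> A} -> R) : R := \big[Num.max/0]_x S x.

End Align.

From HB Require Import structures.
From mathcomp Require Import all_boot all_order all_algebra all_fingroup finmap.
From mathcomp Require Import all_classical all_reals all_analysis.
From mathcomp Require Import lra zify.
From Stdlib Require Import Lia.
Set Implicit Arguments. Unset Strict Implicit. Unset Printing Implicit Defensive.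
Import Order.TTheory GRing.Theory Num.Theory.
Local Open Scope ring_scope.

(* An alignment of score at least m^2 x of the words of length m^2 n, cut greedily
   into consecutive pieces, contains a piece of score at least x - smax S whose
   columns lie in a box with side lengths summing to at most mn: every piece that
   does not fit into such a box uses up more than mn of the fewer than m^2 (mn + 1)
   available positions. A union bound over the at most (m^2 n)^m (mn)^m boxes
   leaves the probability that a fixed box carries score x - smax S. Its m-th power
   is the probability that m independent copies of the box all do; placing the
   contents of copy r in word j at coordinate j + r mod m and concatenating the
   copies gives, by symmetry of S, m words of length at most mn aligned with score
   at least m (x - smax S). *)

Section ProductWeight.
Variables (R : realType) (A : finType) (p : A -> R).

Definition weight (X : finType) (u : {ffun X -> A}) : R := \prod_x p (u x).

Lemma prod_over_image (X Y : finType) (g : Y -> X) (g_inj : injective g)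
    (F : X -> Y -> R) :
  \prod_x (if [pick y | g y == x] is Some y then F x y else 1) = \prod_y F (g y) y.
Proof.
rewrite (bigID (fun x => x \in codom g)) /=.
rewrite [X in _ * X]big1 ?mulr1; last first.
  move=> x xn; case: pickP => // y /eqP gy; case/negP: xn; rewrite -gy; exact: codom_f.
rewrite -big_uniq /=; last by rewrite map_inj_uniq ?enum_uniq.
rewrite big_image /=; apply: eq_bigr => y _.
by case: pickP => [y' /eqP /g_inj -> //|/(_ y)]; rewrite eqxx.
Qed.

Lemma prod_nat_eq_ffun (Y : finType) (f g : Y -> A) :
  \prod_y ((f y == g y)%:R : R) = ([ffun y => f y] == [ffun y => g y])%:R.
Proof.
case: eqP => [/ffunP fg|fg].
  by apply: big1 => y _; have := fg y; rewrite !ffunE => ->; rewrite eqxx.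
have [y fgy] : exists y, f y != g y.
  apply/existsP; rewrite -negb_forall; apply/negP => /forallP fg'; apply: fg.
  by apply/ffunP => y; rewrite !ffunE; apply/eqP; move: (fg' y); case: eqP.
by rewrite (bigD1 y) //= (negbTE fgy) mul0r.
Qed.

Lemma sum_weight_uncurry (I J : finType) (F : {ffun I -> {ffun J -> A}} -> R) :
  \sum_(W : {ffun I -> {ffun J -> A}}) (\prod_i \prod_j p (W i j)) * F W =
  \sum_(u : {ffun I * J -> A}) weight u * F [ffun i => [ffun j => u (i, j)]].
Proof.
rewrite (reindex (fun u : {ffun I * J -> A} => [ffun i => [ffun j => u (i, j)]])) /=.
  apply: eq_bigr => u _; congr (_ * _); rewrite /weight pair_big /=.
  by apply: eq_bigr => [[i j]] _; rewrite !ffunE.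
exists (fun W : {ffun I -> {ffun J -> A}} => [ffun y => W y.1 y.2]) => [u _|W _].
  by apply/ffunP => [[i j]]; rewrite !ffunE.
by apply/ffunP => i; apply/ffunP => j; rewrite !ffunE.
Qed.

Hypothesis sum_p1 : \sum_a p a = 1.

(* The coordinates outside the image of [g] are summed out one by one, each
   contributing a factor [\sum_a p a = 1]. *)
Lemma sum_weight_restrict_eq (X Y : finType) (g : Y -> X) (g_inj : injective g)
    (v : {ffun Y -> A}) :
  \sum_(u : {ffun X -> A}) weight u * ([ffun y => u (g y)] == v)%:R = weight v.
Proof.
pose h x a := p a * (if [pick y | g y == x] is Some y then ((a == v y)%:R : R) else 1).
transitivity (\sum_(u : {ffun X -> A}) \prod_x h x (u x)).
  apply: eq_bigr => u _; rewrite /h big_split /=; congr (_ * _).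
  rewrite (prod_over_image g_inj (fun x y => ((u x == v y)%:R : R))).
  by rewrite prod_nat_eq_ffun; congr ((_ == _)%:R); apply/ffunP => y; rewrite !ffunE.
rewrite -bigA_distr_bigA /= /weight -(prod_over_image g_inj (fun x y => p (v y))).
apply: eq_bigr => x _; rewrite /h; case: pickP => [y _|_].
  rewrite (bigD1 (v y)) //= eqxx mulr1 big1 ?addr0 // => a /negbTE ->.
  by rewrite mulr0.
by under eq_bigr do rewrite mulr1.
Qed.

Lemma sum_weight_restrict (X Y : finType) (g : Y -> X) (g_inj : injective g)
    (F : {ffun Y -> A} -> R) :
  \sum_(u : {ffun X -> A}) weight u * F [ffun y => u (g y)] = \sum_v weight v * F v.
Proof.
transitivity
    (\sum_(u : {ffun X -> A}) \sum_v weight u * ([ffun y => u (g y)] == v)%:R * F v).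
  apply: eq_bigr => u _; rewrite (bigD1 [ffun y => u (g y)]) //= eqxx mulr1.
  rewrite big1 ?addr0 // => v /negbTE; rewrite eq_sym => ->.
  by rewrite mulr0 mul0r.
rewrite exchange_big /=; apply: eq_bigr => v _.
by rewrite -big_distrl /= sum_weight_restrict_eq.
Qed.

End ProductWeight.

Section Alignments.
Variables (R : realType) (A : finType) (m : nat) (S : {ffun 'I_m -> A} -> R).

Definition column N := {ffun 'I_m -> 'I_N}.

Definition col_lt N : rel (column N) := fun c1 c2 => [forall j, (c1 j < c2 j)%N].

Lemma col_lt_trans N : transitive (@col_lt N).
Proof.
move=> c2 c1 c3 /forallP lt12 /forallP lt23; apply/forallP => j.
exact: ltn_trans (lt12 j) (lt23 j).
Qed.

Definition col_score N (w : words A m N) (c : column N) := S [ffun j => w j (c j)].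

Lemma col_score_le_smax N (w : words A m N) c : col_score w c <= smax S.
Proof. by rewrite /col_score /smax; apply: le_bigmax. Qed.

Lemma smax_ge0 : 0 <= smax S.
Proof. exact: bigmax_ge_id. Qed.

Lemma opt_score_ge0 N (w : words A m N) : 0 <= opt_score S w.
Proof. exact: bigmax_ge_id. Qed.

Hypothesis m_gt0 : (0 < m)%N.

Lemma size_sorted_col_lt N (s : seq (column N)) : sorted (@col_lt N) s -> (size s <= N)%N.
Proof.
move=> ss; pose j0 := Ordinal m_gt0.
pose s0 := map (fun c : column N => nat_of_ord (c j0)) s.
have ss0 : sorted ltn s0.
  by rewrite /s0 sorted_map; apply: sub_sorted ss => c1 c2 /forallP; apply.
have -> : size s = size s0 by rewrite size_map.
rewrite -(size_iota 0 N).
apply: uniq_leq_size; first exact: (sorted_uniq ltn_trans ltnn).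
by move=> i /mapP [c _ ->]; rewrite mem_iota /= ltn_ord.
Qed.

Lemma sum_sorted_le_opt_score N (w : words A m N) (s : seq (column N)) :
  sorted (@col_lt N) s -> \sum_(c <- s) col_score w c <= opt_score S w.
Proof.
case: s => [_|c0 s']; first by rewrite big_nil opt_score_ge0.
set s := c0 :: s' => ss.
have size_s : (size s < N.+1)%N by rewrite ltnS size_sorted_col_lt.
pose pi := [ffun j => [ffun i : 'I_(size s) => nth c0 s i j]].
have pi_al : is_alignment pi.
  apply/forallP => j; apply/forallP => i1; apply/forallP => i2; apply/implyP => lt12.
  rewrite !ffunE.
  have /forallP := sorted_ltn_nth (@col_lt_trans N) c0 ss i1 i2 (ltn_ord i1) (ltn_ord i2) lt12.
  exact.
have -> : \sum_(c <- s) col_score w c = align_score S w pi.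
  rewrite (big_nth c0) big_mkord /align_score; apply: eq_bigr => i _.
  by rewrite /col_score; congr S; apply/ffunP => j; rewrite !ffunE.
apply: le_trans (le_bigmax _ _ (Ordinal size_s)) => /=.
exact: (le_bigmax_cond _ _ pi_al).
Qed.

Lemma opt_score_sorted_cols N (w : words A m N) :
  exists s : seq (column N),
    sorted (@col_lt N) s /\ opt_score S w <= \sum_(c <- s) col_score w c.
Proof.
have := lexx (opt_score S w); rewrite {2}/opt_score.
case/bigmax_geP => [le0|[k _]]; first by exists [::]; rewrite big_nil.
case/bigmax_geP => [le0|[pi pi_al le_pi]]; first by exists [::]; rewrite big_nil.
exists [seq [ffun j => pi j i] | i <- enum 'I_k]; split.
  rewrite sorted_map.
  have : sorted (relpre val ltn) (enum 'I_k).
    by rewrite -sorted_map val_enum_ord iota_ltn_sorted.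
  apply: sub_sorted => i1 i2 /= lt12; apply/forallP => j; rewrite !ffunE.
  by have /forallP/(_ i1)/forallP/(_ i2)/implyP := forallP pi_al j; apply.
apply: (le_trans le_pi); rewrite big_map big_enum /= /align_score le_eqVlt.
apply/orP; left; apply/eqP/eq_bigr => i _.
by rewrite /col_score; congr S; apply/ffunP => j; rewrite !ffunE.
Qed.

Lemma opt_score_len0 (w : words A m 0) : opt_score S w = 0.
Proof.
apply/le_anti; rewrite opt_score_ge0 andbT.
have [s [ss /le_trans]] := opt_score_sorted_cols w; apply.
by have := size_sorted_col_lt ss; rewrite leqn0 => /nilP ->; rewrite big_nil.
Qed.

End Alignments.

Section Boxes.
Variables (R : realType) (A : finType) (m : nat) (S : {ffun 'I_m -> A} -> R).
Variables (N B : nat).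

Definition col_le (c1 c2 : column m N) := [forall j, (c1 j <= c2 j)%N].

Definition in_box (h e : column m N) (c : column m N) := [forall j, (h j <= c j <= e j)%N].

Definition fits (h c : column m N) := (\sum_j (c j - h j).+1 <= B)%N.

(* The positions left for an increasing sequence of columns beginning with its head. *)
Definition remaining (s : seq (column m N)) :=
  if s is h :: _ then (\sum_j (N - h j))%N else 0%N.

Lemma col_lt_le (c1 c2 : column m N) : col_lt c1 c2 -> col_le c1 c2.
Proof. by move/forallP => lt12; apply/forallP => j; apply: ltnW. Qed.

Lemma col_le_trans : transitive col_le.
Proof.
move=> c2 c1 c3 /forallP le12 /forallP le23; apply/forallP => j.
exact: leq_trans (le12 j) (le23 j).
Qed.

Lemma col_le_refl c : col_le c c.
Proof. by apply/forallP. Qed.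

Lemma sorted_col_le_last (h : column m N) t :
  sorted (@col_lt m N) (h :: t) -> forall c, c \in h :: t -> col_le c (last h t).
Proof.
elim: t h => [|c1 t IH] h /=.
  by move=> _ c; rewrite inE => /eqP ->; apply: col_le_refl.
case/andP => hc1 pt c; rewrite inE => /orP [/eqP ->|ct]; last exact: IH.
by apply: col_le_trans (col_lt_le hc1) _; apply: IH => //; apply: mem_head.
Qed.

Lemma sorted_col_le_head (h : column m N) t :
  sorted (@col_lt m N) (h :: t) -> forall c, c \in h :: t -> col_le h c.
Proof.
move=> /= pt c; rewrite inE => /orP [/eqP ->|ct]; first exact: col_le_refl.
by have /allP/(_ c ct) := order_path_min (@col_lt_trans m N) pt; apply: col_lt_le.
Qed.

Lemma split_fits (h : column m N) t :
  all (fits h) t \/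
  exists p d rest, [/\ t = p ++ d :: rest, all (fits h) p & ~~ fits h d].
Proof.
elim: t => [|c t [IH|[p [d [rest [-> fp nfd]]]]]]; first by left.
- case fc: (fits h c); first by left; rewrite /= fc.
  by right; exists [::], c, t; rewrite fc.
- case fc: (fits h c); first by right; exists (c :: p), d, rest; rewrite /= fc.
  by right; exists [::], c, (p ++ d :: rest); rewrite fc.
Qed.

Lemma fits_refl h : (m <= B)%N -> fits h h.
Proof.
move=> mB; rewrite /fits (eq_bigr (fun=> 1%N)) ?sum1_card ?card_ord // => j _.
by rewrite subnn.
Qed.

(* A column [d] not fitting in a box cornered at [h] is more than [B] positions
   beyond [h], and everything after [d] lies beyond [d]. *)
Lemma remaining_skip h p d rest :
  sorted (@col_lt m N) (h :: p ++ d :: rest) -> ~~ fits h d ->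
  (remaining rest + B.+1 <= remaining (h :: p ++ d :: rest))%N.
Proof.
move=> ss; rewrite /fits -ltnNge => nfd.
have hd : col_le h d by apply: (sorted_col_le_head ss); rewrite !(inE, mem_cat) eqxx !orbT.
apply: (@leq_trans (remaining rest + \sum_j (d j - h j).+1)); first by rewrite leq_add2l.
case: rest ss => [|h' rest] /=.
  move=> _; rewrite add0n; apply: leq_sum => j _.
  move/forallP: hd => /(_ j); move: (ltn_ord (d j)).
  by move: (nat_of_ord (d j)) (nat_of_ord (h j)) => b c; lia.
rewrite cat_path => /andP [_ /= /and3P [_ /forallP dh' _]].
rewrite -big_split /=; apply: leq_sum => j _.
move: (ltn_ord (h' j)) (dh' j) (forallP hd j).
by move: (nat_of_ord (h' j)) (nat_of_ord (d j)) (nat_of_ord (h j)) => a b c; lia.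
Qed.

Variables (w : words A m N) (x s0 : R).
Hypotheses (x_gt0 : 0 < x) (s0_ge0 : 0 <= s0) (col_score_le : forall c, col_score S w c <= s0).

Definition box_chunk := exists (s : seq (column m N)) (h e : column m N),
  [/\ sorted (@col_lt m N) s, all (in_box h e) s, col_le h e, fits h e &
      x - s0 <= \sum_(c <- s) col_score S w c].

Lemma box_chunk_of_fits (h : column m N) t :
  sorted (@col_lt m N) (h :: t) -> all (fits h) (h :: t) ->
  x - s0 <= \sum_(c <- h :: t) col_score S w c -> box_chunk.
Proof.
move=> ss ft sc; exists (h :: t), h, (last h t); split => //.
- apply/allP => c cin; apply/forallP => j.
  have /forallP/(_ j) -> := sorted_col_le_head ss cin.
  by have /forallP/(_ j) -> := sorted_col_le_last ss cin.
- exact: sorted_col_le_last ss _ (mem_head _ _).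
- by move/allP: ft; apply; rewrite mem_last.
Qed.

(* Greedy cutting: either the columns fitting in the box cornered at the head carry
   score [x - s0], or discarding them and the next column costs at most [x] of score
   and more than [B] remaining positions. *)
Lemma box_chunk_exists q (s : seq (column m N)) : (m <= B)%N ->
  sorted (@col_lt m N) s -> q%:R * x <= \sum_(c <- s) col_score S w c ->
  (remaining s < q * B.+1)%N -> box_chunk.
Proof.
move=> mB; elim: q s => [|q IH] s ss score_s rem_s.
  by rewrite mul0n ltn0 in rem_s.
case: s ss score_s rem_s => [|h s'] ss score_s rem_s.
  move: score_s; rewrite big_nil pmulr_rle0 ?ltr0n //.
  by move=> /(lt_le_trans x_gt0); rewrite ltxx.
have [ft|[p [d [rest [es fp nfd]]]]] := split_fits h (h :: s').
  apply: (box_chunk_of_fits ss ft); apply: le_trans _ score_s.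
  apply: (@le_trans _ _ x); first by rewrite lerBlDr lerDl.
  by rewrite -{1}[x]mul1r ler_wpM2r ?(ltW x_gt0) // ler1n.
move: ss score_s rem_s; case: p es fp => [[hd _] _|h0 p [<- ->] fp ss score_s rem_s].
  by rewrite hd fits_refl in nfd.
have sp : sorted (@col_lt m N) (h :: p) by move: ss; rewrite /= cat_path => /andP [].
have sr : sorted (@col_lt m N) rest.
  by move: ss; rewrite /= cat_path => /andP [_ /= /andP [_ /path_sorted]].
have [score_p|score_p] := lerP (x - s0) (\sum_(c <- h :: p) col_score S w c).
  exact: (box_chunk_of_fits sp fp score_p).
apply: (IH rest sr).
  move: score_s score_p (col_score_le d).
  rewrite -cat_cons big_cat /= !big_cons -natr1 mulrDl mul1r.
  set sum_p := \sum_(c <- p) _; set sum_rest := \sum_(c <- rest) _.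
  by move=> *; lra.
move: rem_s (remaining_skip ss nfd); rewrite mulSn.
by move: (remaining rest) (q * B.+1)%N => a b; lia.
Qed.

End Boxes.

Lemma pairwise_flatten_map (T I : Type) (r : rel T) (lt : rel I) (F : I -> seq T)
    (s : seq I) :
  pairwise lt s -> (forall i, pairwise r (F i)) ->
  (forall i1 i2, lt i1 i2 -> allrel r (F i1) (F i2)) ->
  pairwise r (flatten (map F s)).
Proof.
move=> lt_s rF ltF; elim: s lt_s => [|i s IH] //= /andP [lt_i lt_s].
rewrite pairwise_cat rF IH // andbT.
elim: s lt_i {IH lt_s} => [|i' s IH] /=; first by move=> _; elim: (F i).
by case/andP => lt_ii' lt_i; rewrite allrel_catr ltF // IH.
Qed.

Section CyclicConcat.
Variables (R : realType) (A : finType) (m : nat) (S : {ffun 'I_m -> A} -> R).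
Hypothesis m_gt0 : (0 < m)%N.
Hypothesis S_sym :
  forall (s : {perm 'I_m}) (x : {ffun 'I_m -> A}), S [ffun j => x (s j)] = S x.
Variables (N : nat) (a : column m N) (len : 'I_m -> nat).
Hypothesis block_in : forall i, (a i + len i < N)%N.

Definition rot_ord (r : nat) (j : 'I_m) : 'I_m := Ordinal (ltn_pmod (j + r) m_gt0).

Lemma rot_ord_inj r : injective (rot_ord r).
Proof.
move=> j1 j2 /(congr1 val) /= /eqP; rewrite eqn_modDr !modn_small // => /eqP.
exact: val_inj.
Qed.

Lemma rot_ord_injl (j : 'I_m) : injective (fun r : 'I_m => rot_ord r j).
Proof.
move=> r1 r2 /(congr1 val) /= /eqP; rewrite eqn_modDl !modn_small // => /eqP.
exact: val_inj.
Qed.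

(* Word [j] of the concatenation is made of the blocks [rot_ord r j] of the copies
   [r = 0, ..., m - 1], the block of coordinate [i] having length [(len i).+1]. *)
Definition cyc_len := (\sum_i (len i).+1)%N.

Definition cyc_off (j : 'I_m) (r : nat) := (\sum_(r' < r) (len (rot_ord r' j)).+1)%N.

Lemma cyc_offS j r : cyc_off j r.+1 = (cyc_off j r + (len (rot_ord r j)).+1)%N.
Proof. by rewrite /cyc_off big_ord_recr. Qed.

Lemma cyc_off0 j : cyc_off j 0 = 0%N.
Proof. by rewrite /cyc_off big_ord0. Qed.

Lemma cyc_off_mono j : {homo cyc_off j : r1 r2 / (r1 <= r2)%N}.
Proof.
move=> r1 r2 /subnK <-; elim: (r2 - r1)%N => [|d IH] //.
by rewrite addSn cyc_offS (leq_trans IH) // leq_addr.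
Qed.

Lemma cyc_off_m j : cyc_off j m = cyc_len.
Proof.
rewrite /cyc_len (reindex_inj (@rot_ord_injl j)) /cyc_off; apply: eq_bigr => r _.
by congr (len _).+1; apply: val_inj.
Qed.

Lemma cyc_len_gt0 : (0 < cyc_len)%N.
Proof. by rewrite /cyc_len (bigD1 (Ordinal m_gt0)). Qed.

Definition cyc_block j k := find (fun r => (k < cyc_off j r.+1)%N) (iota 0 m).

Lemma cyc_blockP j k : (k < cyc_len)%N ->
  [/\ (cyc_block j k < m)%N, (cyc_off j (cyc_block j k) <= k)%N
    & (k < cyc_off j (cyc_block j k).+1)%N].
Proof.
move=> k_lt.
have has_blk : has (fun r => (k < cyc_off j r.+1)%N) (iota 0 m).
  apply/hasP; exists m.-1; first by rewrite mem_iota add0n prednK ?leqnn.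
  by rewrite prednK // cyc_off_m.
have blk_lt : (cyc_block j k < m)%N by rewrite -[m](size_iota 0) -has_find.
split => //; last by have := nth_find 0%N has_blk; rewrite nth_iota // add0n.
case E: (cyc_block j k) => [|b]; first by rewrite cyc_off0.
have := @before_find _ 0%N (fun r => (k < cyc_off j r.+1)%N) (iota 0 m) b.
rewrite -/(cyc_block j k) E ltnSn nth_iota ?add0n; last by rewrite -E ltnW.
by move=> /(_ isT) /negbT; rewrite -leqNgt.
Qed.

Lemma cyc_block_eq j k r : (r < m)%N -> (cyc_off j r <= k < cyc_off j r.+1)%N ->
  cyc_block j k = r.
Proof.
move=> r_lt /andP [k_ge k_lt].
have k_lt' : (k < cyc_len)%N.
  by rewrite -(cyc_off_m j) (leq_trans k_lt) // cyc_off_mono.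
have [_ b_le b_gt] := cyc_blockP j k_lt'.
case: (ltngtP (cyc_block j k) r) => // lt_br.
- by have := cyc_off_mono j lt_br; lia.
- by have := cyc_off_mono j lt_br; lia.
Qed.

Lemma cyc_pos_lt j k : (k < cyc_len)%N ->
  (a (rot_ord (cyc_block j k) j) + (k - cyc_off j (cyc_block j k)) < N)%N.
Proof.
move=> k_lt; have [_ b_le b_gt] := cyc_blockP j k_lt; rewrite cyc_offS in b_gt.
by have := block_in (rot_ord (cyc_block j k) j); lia.
Qed.

(* Position [k] of word [j] of the concatenation, as (copy, word, position). *)
Definition cyc_index (y : 'I_m * 'I_cyc_len) : 'I_m * ('I_m * 'I_N) :=
  let: (j, k) := y in let r := cyc_block j k in
  (insubd j r, (rot_ord r j,
    insubd (a (rot_ord r j)) (a (rot_ord r j) + (k - cyc_off j r))%N)).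

Lemma cyc_index_inj : injective cyc_index.
Proof.
move=> [j1 k1] [j2 k2] /= [eq_r eq_j eq_k].
have [b1_lt b1_le _] := cyc_blockP j1 (ltn_ord k1).
have [b2_lt b2_le _] := cyc_blockP j2 (ltn_ord k2).
move/(congr1 val): eq_r; rewrite !val_insubd b1_lt b2_lt => eq_b.
rewrite eq_b in eq_j eq_k b1_le.
have ej : j1 = j2 by apply: (@rot_ord_inj (cyc_block j2 k2)); apply: val_inj.
subst j2; move/(congr1 val): eq_k; rewrite !val_insubd.
have := cyc_pos_lt j1 (ltn_ord k1); rewrite eq_b => ->.
rewrite (cyc_pos_lt j1 (ltn_ord k2)) => eq_k.
by congr pair; apply: val_inj => /=; lia.
Qed.

Definition in_block (c : column m N) := [forall i, (a i <= c i <= a i + len i)%N].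

Definition cyc_shift (r : nat) (c : column m N) : column m cyc_len :=
  [ffun j => insubd (Ordinal cyc_len_gt0) (cyc_off j r + (c (rot_ord r j) - a (rot_ord r j)))%N].

Lemma cyc_shift_lt r c j : in_block c ->
  (cyc_off j r + (c (rot_ord r j) - a (rot_ord r j)) < cyc_off j r.+1)%N.
Proof. by move=> /forallP /(_ (rot_ord r j)); rewrite cyc_offS; lia. Qed.

Lemma cyc_shiftE r c j : (r < m)%N -> in_block c ->
  nat_of_ord (cyc_shift r c j) = (cyc_off j r + (c (rot_ord r j) - a (rot_ord r j)))%N.
Proof.
move=> r_lt c_in; rewrite ffunE val_insubd.
by rewrite (leq_trans (cyc_shift_lt r j c_in)) // -(cyc_off_m j) cyc_off_mono.
Qed.

Lemma cyc_index_shift r c j : (r < m)%N -> in_block c ->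
  cyc_index (j, cyc_shift r c j) = (insubd j r, (rot_ord r j, c (rot_ord r j))).
Proof.
move=> r_lt c_in; rewrite /cyc_index cyc_shiftE //.
have -> : cyc_block j (cyc_off j r + (c (rot_ord r j) - a (rot_ord r j))) = r.
  by apply: cyc_block_eq => //; rewrite leq_addr cyc_shift_lt.
congr (_, (_, _)); apply: val_inj; rewrite val_insubd addKn.
move/forallP: c_in => /(_ (rot_ord r j)) /andP [le_ac _].
by rewrite subnKC // ltn_ord.
Qed.

Definition copy_words (u : {ffun 'I_m * ('I_m * 'I_N) -> A}) (r : 'I_m) : words A m N :=
  [ffun i => [ffun q => u (r, (i, q))]].

Definition cyc_words (u : {ffun 'I_m * ('I_m * 'I_N) -> A}) : words A m cyc_len :=
  [ffun j => [ffun k => u (cyc_index (j, k))]].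

Lemma col_score_cyc_shift u (r : 'I_m) c : in_block c ->
  col_score S (cyc_words u) (cyc_shift r c) = col_score S (copy_words u r) c.
Proof.
move=> c_in; rewrite /col_score -[RHS](S_sym (perm (@rot_ord_inj r))).
congr S; apply/ffunP => j; rewrite /cyc_words /copy_words !ffunE permE.
have := cyc_index_shift j (ltn_ord r) c_in; rewrite ffunE => ->.
by have -> : insubd j r = r by apply: val_inj; rewrite val_insubd ltn_ord.
Qed.

Lemma sorted_cyc_shift (r : 'I_m) s :
  sorted (@col_lt m N) s -> all in_block s -> sorted (@col_lt m cyc_len) (map (cyc_shift r) s).
Proof.
move=> ss s_in; rewrite sorted_map.
apply: (sub_in_sorted _ s_in ss) => c1 c2.
rewrite !unfold_in => /forallP c1_in /forallP c2_in /forallP lt12.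
apply/forallP => j; rewrite /= !cyc_shiftE //; try exact/forallP.
have := c1_in (rot_ord r j); have := c2_in (rot_ord r j); have := lt12 (rot_ord r j).
lia.
Qed.

Lemma cyc_words_opt_score u (t : R) :
  (forall r : 'I_m, exists s, [/\ sorted (@col_lt m N) s, all in_block s &
        t <= \sum_(c <- s) col_score S (copy_words u r) c]) ->
  m%:R * t <= opt_score S (cyc_words u).
Proof.
move=> /fin_all_exists [s s_ok].
pose F := fun r : 'I_m => map (cyc_shift r) (s r).
have sorted_F : sorted (@col_lt m cyc_len) (flatten (map F (enum 'I_m))).
  rewrite (sorted_pairwise (@col_lt_trans m cyc_len)).
  apply: (@pairwise_flatten_map _ 'I_m _ (fun r1 r2 : 'I_m => (r1 < r2)%N)).
  - have lt_trans : transitive (fun r1 r2 : 'I_m => (r1 < r2)%N).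
      by move=> ? ? ?; apply: ltn_trans.
    rewrite -(sorted_pairwise lt_trans).
    have : sorted ltn (map val (enum 'I_m)) by rewrite val_enum_ord iota_ltn_sorted.
    by rewrite sorted_map.
  - move=> r; have [ss s_in _] := s_ok r.
    by rewrite -(sorted_pairwise (@col_lt_trans m cyc_len)) sorted_cyc_shift.
  - move=> r1 r2 lt12; apply/allrelP => c1 c2 /mapP [d1 d1_in ->] /mapP [d2 d2_in ->].
    have [_ /allP s1_in _] := s_ok r1; have [_ /allP s2_in _] := s_ok r2.
    apply/forallP => j; rewrite !cyc_shiftE ?(s1_in d1 d1_in) ?(s2_in d2 d2_in) //.
    have := cyc_shift_lt r1 j (s1_in d1 d1_in); have := cyc_off_mono j lt12.
    by move: (cyc_off j r2) (cyc_off j r1.+1) => o2 o1; lia.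
apply: le_trans (sum_sorted_le_opt_score S m_gt0 (cyc_words u) sorted_F).
rewrite big_flatten /= big_map big_enum /= mulr_natl -[X in t *+ X]card_ord.
rewrite -sumr_const; apply: ler_sum => r _.
have [_ s_in t_le] := s_ok r; rewrite big_map; apply: le_trans t_le _.
rewrite le_eqVlt big_seq_cond [X in _ == X]big_seq_cond; apply/orP; left.
by apply/eqP/eq_bigr => c /andP [c_in _]; rewrite col_score_cyc_shift // (allP s_in).
Qed.

End CyclicConcat.

Lemma prod_nat_le (R : realType) (I : finType) (b : I -> bool) (c : bool) :
  ((forall i, b i) -> c) -> \prod_i ((b i)%:R : R) <= (c%:R : R).
Proof.
move=> bc; have [/forallP b_all|] := boolP [forall i, b i].
  by rewrite big1 ?bc // => i _; rewrite b_all.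
rewrite negb_forall => /existsP [i /negbTE bi].
by rewrite (bigD1 i) //= bi mul0r ler0n.
Qed.

Definition curry_ffun (A I J : finType) (u : {ffun I * J -> A}) : {ffun I -> {ffun J -> A}} :=
  [ffun i => [ffun j => u (i, j)]].

Section Probability.
Variables (R : realType) (A : finType) (m : nat) (p : A -> R) (S : {ffun 'I_m -> A} -> R).
Hypotheses (p_ge0 : forall a, 0 <= p a) (sum_p1 : \sum_a p a = 1).

Definition prob N (E : words A m N -> bool) :=
  \sum_(w : words A m N) (\prod_j \prod_i p (w j i)) * (E w)%:R.

Lemma weight_ge0 (X : finType) (u : {ffun X -> A}) : 0 <= weight p u.
Proof. exact: prodr_ge0. Qed.

Lemma prob_ge0 N (E : words A m N -> bool) : 0 <= prob E.
Proof.
apply: sumr_ge0 => w _; apply: mulr_ge0 => //.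
by apply: prodr_ge0 => j _; apply: prodr_ge0.
Qed.

Lemma probE N (E : words A m N -> bool) :
  prob E = \sum_(u : {ffun 'I_m * 'I_N -> A}) weight p u * (E (curry_ffun u))%:R.
Proof. exact: sum_weight_uncurry. Qed.

Lemma prob_L_geE N (t : R) :
  prob_L_ge p S N t = prob (fun w : words A m N => t <= opt_score S w).
Proof.
rewrite /prob_L_ge /prob big_mkcond /=; apply: eq_bigr => w _.
by case: ifP; rewrite ?mulr1 ?mulr0.
Qed.

Lemma prob_L_ge_len0 (t : R) : (0 < m)%N -> 0 < t -> prob_L_ge p S 0 t = 0.
Proof.
move=> m_gt0 t_gt0; rewrite /prob_L_ge big1 // => w.
by rewrite opt_score_len0 // leNgt t_gt0.
Qed.

Hypothesis m_gt0 : (0 < m)%N.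

Lemma opt_score_prefix L M (le_LM : (L <= M)%N) (u : {ffun 'I_m * 'I_M -> A}) :
  opt_score S (curry_ffun [ffun y : 'I_m * 'I_L => u (y.1, widen_ord le_LM y.2)]) <=
  opt_score S (curry_ffun u).
Proof.
set w := curry_ffun _.
have [s [ss /le_trans]] := opt_score_sorted_cols S w; apply.
pose widen_col := fun c : column m L => [ffun j => widen_ord le_LM (c j)] : column m M.
have ss' : sorted (@col_lt m M) (map widen_col s).
  rewrite sorted_map; apply: sub_sorted ss => c1 c2 /forallP lt12.
  by apply/forallP => j; rewrite !ffunE; apply: lt12.
apply: le_trans (sum_sorted_le_opt_score S m_gt0 (curry_ffun u) ss').
rewrite big_map le_eqVlt; apply/orP; left; apply/eqP/eq_bigr => c _.
by rewrite /col_score; congr S; apply/ffunP => j; rewrite !ffunE.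
Qed.

Lemma prob_L_ge_prefix L M (le_LM : (L <= M)%N) (t : R) :
  \sum_(v : {ffun 'I_m * 'I_L -> A}) weight p v * (t <= opt_score S (curry_ffun v))%R%:R
  <= prob_L_ge p S M t.
Proof.
rewrite prob_L_geE probE.
have widen_inj : injective (fun y : 'I_m * 'I_L => (y.1, widen_ord le_LM y.2)).
  by move=> [j1 k1] [j2 k2] /= [-> /val_inj ->].
rewrite -(sum_weight_restrict sum_p1 widen_inj
  (fun v => (t <= opt_score S (curry_ffun v))%R%:R)).
apply: ler_sum => u _; apply: ler_wpM2l; first exact: weight_ge0.
rewrite ler_nat; case: (boolP (t <= _)) => //= t_le.
by rewrite (le_trans t_le) // opt_score_prefix.
Qed.

Hypothesis S_sym :
  forall (s : {perm 'I_m}) (x : {ffun 'I_m -> A}), S [ffun j => x (s j)] = S x.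
Variables (N : nat) (a : column m N) (len : 'I_m -> nat).
Hypothesis block_in : forall i, (a i + len i < N)%N.
Variable t : R.

Definition block_event (w : words A m N) : bool :=
  `[< exists s, [/\ sorted (@col_lt m N) s, all (in_block a len) s &
        t <= \sum_(c <- s) col_score S w c] >].

(* The [m]-th power is the probability that [m] independent copies of the words all
   satisfy [block_event]; their cyclic concatenation then has score [m * t]. *)
Lemma prob_block_event_expn : prob block_event ^+ m <=
  \sum_(v : {ffun 'I_m * 'I_(cyc_len len) -> A})
     weight p v * (m%:R * t <= opt_score S (curry_ffun v))%R%:R.
Proof.
rewrite probE -[m in _ ^+ m]card_ord -prodr_const bigA_distr_bigA /=.
under eq_bigr do rewrite big_split /=.
rewrite /weight sum_weight_uncurry.
rewrite -(sum_weight_restrict sum_p1 (cyc_index_inj block_in)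
  (fun v => (m%:R * t <= opt_score S (curry_ffun v))%R%:R)).
apply: ler_sum => u _; apply: ler_wpM2l; first exact: weight_ge0.
apply: prod_nat_le => events.
have -> : curry_ffun [ffun y => u (cyc_index m_gt0 a y)] = cyc_words m_gt0 a len u.
  by apply/ffunP => j; apply/ffunP => k; rewrite !ffunE.
apply/(cyc_words_opt_score m_gt0 S_sym) => r.
have -> : copy_words u r = curry_ffun ([ffun i => [ffun j => u (i, j)]] r).
  by apply/ffunP => j; apply/ffunP => k; rewrite !ffunE.
exact/asboolP/events.
Qed.

Lemma prob_block_event_le M : (cyc_len len <= M)%N ->
  prob block_event <= powR (prob_L_ge p S M (m%:R * t)) (m%:R)^-1.
Proof.
move=> len_le; have q_ge0 := prob_ge0 block_event.
have q_expn : prob block_event ^+ m <= prob_L_ge p S M (m%:R * t).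
  exact: le_trans prob_block_event_expn (prob_L_ge_prefix len_le _).
have -> : prob block_event = powR (prob block_event ^+ m) (m%:R)^-1.
  by rewrite -powR_mulrn // -powRrM mulfV ?powRr1 // pnatr_eq0 -lt0n.
apply: (@ge0_ler_powR _ (m%:R^-1)).
- by rewrite invr_ge0 ler0n.
- by rewrite nnegrE exprn_ge0.
- by rewrite nnegrE (le_trans _ q_expn) // exprn_ge0.
- exact: q_expn.
Qed.

End Probability.

Lemma card_box_le (R : realType) (m n : nat) : (2 <= m)%N ->
  ((m ^ 2 * n) ^ m * (m * n) ^ m)%:R <= m%:R ^+ (4 * m) * n%:R ^+ (2 * m) / 2 ^+ m :> R.
Proof.
move=> m_ge2; have m_gt0 : (0 < m)%N by apply: leq_trans m_ge2.
rewrite ler_pdivlMr ?exprn_gt0 // -!natrX -!natrM ler_nat.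
rewrite -expnMn expnM [(n ^ (2 * m))%N]expnM -expnMn -expnMn leq_exp2r //.
by move: m_ge2; nia.
Qed.

Section BoxCovering.
Variables (R : realType) (A : finType) (m : nat) (p : A -> R) (S : {ffun 'I_m -> A} -> R).
Variables (n : nat) (x : R).

Local Notation N := (m ^ 2 * n)%N.
Local Notation B := (m * n)%N.

(* A box is given by its lower corner and its side lengths minus one. *)
Definition box := ({ffun 'I_m -> 'I_N} * {ffun 'I_m -> 'I_B})%type.

Definition box_valid (c : box) :=
  [forall i, (c.1 i + c.2 i < N)%N] && (\sum_i (c.2 i).+1 <= B)%N.

Definition box_event (c : box) (w : words A m N) :=
  box_valid c && block_event S c.1 (fun i => nat_of_ord (c.2 i)) (x - smax S) w.

Hypotheses (m_ge2 : (2 <= m)%N) (n_gt0 : (0 < n)%N) (x_gt0 : 0 < x).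

Lemma box_event_exists (w : words A m N) :
  m%:R ^+ 2 * x <= opt_score S w -> exists c, box_event c w.
Proof.
move=> score_w; have m_gt0 : (0 < m)%N by apply: leq_trans m_ge2.
have [s [ss /(le_trans score_w) score_s]] := opt_score_sorted_cols S w.
have mB : (m <= B)%N by rewrite leq_pmulr.
have rem_s : (remaining s < m ^ 2 * B.+1)%N.
  apply: (@leq_ltn_trans (m * N)); last by move: n_gt0 m_ge2; nia.
  case: s {ss score_s} => [|h s'] //=.
  apply: (@leq_trans (\sum_(j < m) N)); last by rewrite sum_nat_const card_ord.
  by apply: leq_sum => j _; apply: leq_subr.
rewrite -natrX in score_s.
have [c [h [e [sc c_in le_he fit_he score_c]]]] :=
  box_chunk_exists x_gt0 (smax_ge0 S) (col_score_le_smax S w) mB ss score_s rem_s.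
have lt_B i : (e i - h i < B)%N.
  by move: fit_he; rewrite /fits (bigD1 i) //=; apply: leq_trans; rewrite ltnS leq_addr.
pose len : {ffun 'I_m -> 'I_B} :=
  [ffun i => insubd (Ordinal (leq_trans m_gt0 mB)) (e i - h i)%N].
have lenE i : nat_of_ord (len i) = (e i - h i)%N by rewrite ffunE val_insubd lt_B.
have h_le_e i : (h i <= e i)%N by apply: (forallP le_he).
exists (h, len); apply/andP; split.
  apply/andP; split.
    by apply/forallP => i /=; rewrite lenE; have := h_le_e i; have := ltn_ord (e i); lia.
  by rewrite (eq_bigr (fun i => (e i - h i).+1)) // => i _; rewrite lenE.
apply/asboolP; exists c; split => //; apply/allP => c1 c1_in.
have /forallP c1_box := allP c_in c1 c1_in; apply/forallP => i /=.
by rewrite lenE; have := c1_box i; have := h_le_e i; lia.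
Qed.

Hypotheses (p_ge0 : forall a, 0 <= p a) (sum_p1 : \sum_a p a = 1).
Hypothesis S_sym :
  forall (s : {perm 'I_m}) (x : {ffun 'I_m -> A}), S [ffun j => x (s j)] = S x.

Lemma prob_L_ge_le_sum_box_event :
  prob_L_ge p S N (m%:R ^+ 2 * x) <= \sum_(c : box) prob p (box_event c).
Proof.
rewrite prob_L_geE /prob exchange_big /=; apply: ler_sum => w _.
rewrite -big_distrr /=; apply: ler_wpM2l.
  by apply: prodr_ge0 => j _; apply: prodr_ge0.
have [/box_event_exists [c c_ev]|_] := boolP (m%:R ^+ 2 * x <= opt_score S w).
  rewrite (bigD1 c) //= c_ev lerDl.
  by apply: sumr_ge0 => c' _; rewrite ler0n.
by apply: sumr_ge0 => c _; rewrite ler0n.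
Qed.

Lemma prob_box_event_le (c : box) :
  prob p (box_event c) <= powR (prob_L_ge p S B (m%:R * (x - smax S))) (m%:R)^-1.
Proof.
have m_gt0 : (0 < m)%N by apply: leq_trans m_ge2.
have [valid_c|invalid_c] := boolP (box_valid c); last first.
  rewrite (_ : prob p _ = 0) ?powR_ge0 //.
  by rewrite /prob big1 // => w _; rewrite /box_event (negbTE invalid_c) mulr0.
have -> : prob p (box_event c) =
    prob p (block_event S c.1 (fun i => nat_of_ord (c.2 i)) (x - smax S)).
  by apply: eq_bigr => w _; rewrite /box_event valid_c.
case/andP: valid_c => /forallP c_in c_len.
exact: prob_block_event_le.
Qed.

End BoxCovering.

Unset Implicit Arguments.

Theorem proposition2p3 (R : realType) (m : nat) (hm : (2 <= m)%N)
  (Alph : {fset R})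
  (p : Alph -> R) (hp0 : forall a, 0 <= p a) (hp1 : \sum_a p a = 1)
  (S : {ffun 'I_m -> Alph} -> R)
  (hS0 : forall x, 0 <= S x)
  (hSnz : exists x, S x != 0)
  (hSsym : forall (s : {perm 'I_m}) (x : {ffun 'I_m -> Alph}), S [ffun j => x (s j)] = S x)
  (hSlip : exists D : R, 0 < D /\
     forall x y : {ffun 'I_m -> Alph},
       (#|[set j | x j != y j]| <= 1)%N -> `|S x - S y| <= D)
  (n : nat) (x : R) (hx : 0 < x) :
  prob_L_ge p S (m ^ 2 * n) (m%:R ^+ 2 * x)
  <= (m%:R ^+ (4 * m) * n%:R ^+ (2 * m)) / 2 ^+ m
     * powR (prob_L_ge p S (m * n) (m%:R * (x - smax S))) (m%:R)^-1.
Proof.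
have m_gt0 : (0 < m)%N by apply: leq_trans hm.
have [-> | n_gt0] := posnP n.
  rewrite muln0 prob_L_ge_len0 ?mulr_gt0 ?exprn_gt0 ?ltr0n //.
  by rewrite mulr_ge0 ?powR_ge0 ?divr_ge0 ?mulr_ge0 ?exprn_ge0 ?ler0n.
apply: le_trans (prob_L_ge_le_sum_box_event S hm n_gt0 hx hp0) _.
apply: le_trans (ler_sum _ (fun c _ => prob_box_event_le x hm hp0 hp1 hSsym c)) _.
rewrite sumr_const card_prod !card_ffun !card_ord -[X in X <= _]mulr_natl.
by apply: ler_wpM2r; [apply: powR_ge0 | apply: card_box_le].
Qed.
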